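(* Let $n\ge2$, let $X\subset\mathbb{R}^n$ be finite with the Euclidean metric $d$, let $k\in\mathbb{N}$, $Y\subset X$ and $\epsilon>0$. If $p,q\in J(Y,\epsilon)$, then $\rho^{F(Y,\epsilon)}(p,q)=\rho^Y(p,q)$.
   Context: DBSCAN$^*$: for $Y\subset X$, $\mathcal{C}(Y,\epsilon)=\{p\in Y:|\{y\in Y:d(p,y)\le\epsilon\}|>k\}$ (core points), $\mathcal{N}(Y,\epsilon)=Y\setminus\mathcal{C}(Y,\epsilon)$ (noise points), and $\mathcal{D}^*(Y,\epsilon)$ is the set of vertex sets of the connected components of the graph with vertex set $\mathcal{C}(Y,\epsilon)$ and an edge between distinct $p,q$ whenever $d(p,q)\le\epsilon$. Reachability: for $Z\subset X$ and $p\in Z$, $\operatorname{core}^Z_k(p)$ is the distance from $p$ to a $k$-th nearest neighbour of $p$ in $Z$ (the $k$-th smallest value of $d(p,z)$, $z\in Z\setminus\{p\}$, counted with multiplicity), and $\rho^Z(p,q)=\max\{\operatorname{core}^Z_k(p),\operatorname{core}^Z_k(q),d(p,q)\}$ for $p\ne q$, $\rho^Z(p,p)=0$. Cubes: $\mathcal{Q}=\mathcal{Q}(\epsilon)$ is the collection of closed cubes $\{x\in\mathbb{R}^n: j_i\frac{\epsilon}{2\sqrt n}\le x_i\le (j_i+1)\frac{\epsilon}{2\sqrt n}\}$, $j\in\mathbb{Z}^n$; $S^m=\{x:\max_i|x_i-s_i|\le m\frac{\epsilon}{2\sqrt n}\text{ for some }s\in S\}$; $\mathcal{I}(B)=\{S\in\mathcal{Q}:S\cap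 B\neq\emptyset\}$. For $A\subset X$, $S\in\mathcal{I}(A)$ is an interior cube of $A$ if $S^1\cap X\subset A$ and every $T\in\mathcal{Q}$ with $T\subset S^1$ lies in $\mathcal{I}(A)$, otherwise a boundary cube; $\partial A$ is the union of boundary cubes. For $Z\subset\mathbb{R}^n$ and integer $N\ge0$, $Z^N=\bigcup_{S\in\mathcal{I}(Z)}S^N$ and $Z^N_C=Z^N\cap C$. $\mathfrak{n}$, $\mathfrak{m}$ are the smallest integers with $\mathfrak{n}\ge\sqrt n-1$, $\mathfrak{m}\ge2\sqrt n$, and $\mathfrak{N}=\mathfrak{n}+\mathfrak{m}$. Define $J(Y,\epsilon)=\bigcup_{C\in\mathcal{D}^*(Y,\epsilon)}(\partial C)^{\mathfrak{n}}_C\cup\mathcal{N}(Y,\epsilon)$ and $F(Y,\epsilon)=\bigcup_{C\in\mathcal{D}^*(Y,\epsilon)}(\partial C)^{\mathfrak{N}}_C\cup\mathcal{N}(Y,\epsilon)$, with cubes taken in $\mathcal{Q}(\epsilon)$. *)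

From HB Require Import structures.
From mathcomp Require Import all_boot all_order all_algebra.
From mathcomp Require Import finmap.
From mathcomp Require Import boolp classical_sets reals.
Set Implicit Arguments. Unset Strict Implicit. Unset Printing Implicit Defensive.
Import Order.TTheory GRing.Theory Num.Theory.
Local Open Scope ring_scope.
Local Open Scope fset_scope.

Section Defs.
Context {R : realType} {n : nat}.
Local Notation V := 'rV[R]_n.

Definition edist (x y : V) : R := Num.sqrt (\sum_(i < n) (x ord0 i - y ord0 i) ^+ 2).

Definition core_pts (k : nat) (eps : R) (Y : {fset V}) : {fset V} :=
  [fset p in Y | (k < #|` [fset y in Y | (edist p y <= eps)%R]|)%N].
Definition noise_pts (k : nat) (eps : R) (Y : {fset V}) : {fset V} :=
  Y `\` core_pts k eps Y.
Definition reach (eps : R) (A : {fset V}) (p q : V) : Prop :=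
  p \in A /\ exists s : seq V,
    [/\ path (fun a b => edist a b <= eps) p s, last p s = q & all (fun x => x \in A) s].
(* C is (the vertex set of) a connected component of the graph on C(Y,eps): C in D*(Y,eps) *)
Definition dbscan_comp (k : nat) (eps : R) (Y C : {fset V}) : Prop :=
  exists2 p, p \in core_pts k eps Y &
    C = [fset q in core_pts k eps Y | `[< reach eps (core_pts k eps Y) p q >]].

(* core_k^Z(p): k-th smallest of d(p,z), z in Z\{p}, with multiplicity
   (k = 0 gives 0, the distance to p itself). *)
Definition core_dist (k : nat) (Z : {fset V}) (p : V) : R :=
  if k is k'.+1 then
    nth 0 (sort (fun a b : R => a <= b) [seq edist p z | z <- enum_fset (Z `\ p)]) k'
  else 0.
Definition reach_dist (k : nat) (Z : {fset V}) (p q : V) : R :=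
  if p == q then 0 else Num.max (core_dist k Z p) (Num.max (core_dist k Z q) (edist p q)).

Definition side (eps : R) : R := eps / (2 * Num.sqrt (n%:R)).
Definition cube (eps : R) (j : 'I_n -> int) : set V :=
  [set x | forall i, (j i)%:~R * side eps <= x ord0 i <= (j i + 1)%:~R * side eps].
Definition enl (eps : R) (m : int) (S : set V) : set V :=
  [set x | exists2 s, S s & forall i, `|x ord0 i - s ord0 i| <= m%:~R * side eps].
Definition meets (eps : R) (B : set V) (j : 'I_n -> int) : Prop :=
  exists x, cube eps j x /\ B x.
Definition fset_set_of (A : {fset V}) : set V := [set x | x \in A].
Definition interior_cube (eps : R) (X A : {fset V}) (j : 'I_n -> int) : Prop :=
  [/\ meets eps (fset_set_of A) j,
      (forall x, enl eps 1 (cube eps j) x -> x \in X -> x \in A)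
    & (forall t, (cube eps t `<=` enl eps 1 (cube eps j))%classic -> meets eps (fset_set_of A) t)].
Definition boundary_cube (eps : R) (X A : {fset V}) (j : 'I_n -> int) : Prop :=
  meets eps (fset_set_of A) j /\ ~ interior_cube eps X A j.
Definition bdry (eps : R) (X A : {fset V}) : set V :=
  [set x | exists j, boundary_cube eps X A j /\ cube eps j x].
Definition thicken (eps : R) (N : int) (Z : set V) : set V :=
  [set x | exists j, meets eps Z j /\ enl eps N (cube eps j) x].

Definition nfrak : int := Num.ceil (Num.sqrt (n%:R : R) - 1).
Definition mfrak : int := Num.ceil (2 * Num.sqrt (n%:R : R)).
Definition Nfrak : int := nfrak + mfrak.

Definition JF_set (N : int) (X : {fset V}) (k : nat) (eps : R) (Y : {fset V}) : {fset V} :=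
  [fset x in Y | `[< (exists C, dbscan_comp k eps Y C /\
                        (thicken eps N (bdry eps X C) x /\ x \in C))
                     \/ x \in noise_pts k eps Y >]].
Definition Jset X k eps Y := JF_set nfrak X k eps Y.
Definition Fset X k eps Y := JF_set Nfrak X k eps Y.
End Defs.

(* Since F(Y,eps) is a subset of Y, the k-th nearest-neighbour distance of p is the same
   in F(Y,eps) and in Y as soon as every z in Y with d(p,z) <= core_k^Y(p) lies in F(Y,eps).
   Noise points lie in F(Y,eps) by definition, so let z be a core point.
   If p is a core point of a cluster C with p in (dC)^n_C, then core_k^Y(p) <= eps, so z lies
   in C, and z is in (dC)^N because the displacement eps is at most m cube sides.
   If p is noise and C is the cluster of z, let r0 be the distance from p to C; then
   core_k^Y(p) <= r0 + eps.  Close to z there is a cube all of whose neighbours meeting C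
   are boundary cubes: the cube of p, or a cube on the segment from p to z that misses C.
   Walking from the cube of z towards it, every cube is either a boundary cube or an
   interior one whose neighbours all meet C, so a boundary cube is reached within N cubes
   of z. *)

From Pilot Require Import Defs.
From HB Require Import structures.
From mathcomp Require Import all_boot all_order all_algebra.
From mathcomp Require Import finmap.
From mathcomp Require Import boolp classical_sets reals.
From mathcomp Require Import ring lra zify.
(* Re-imported so that [Defs.meets] shadows [classical_sets.meets]. *)
Import Pilot.Defs.
Set Implicit Arguments. Unset Strict Implicit. Unset Printing Implicit Defensive.
Import Order.TTheory GRing.Theory Num.Theory.
Local Open Scope ring_scope.

Section Euclid.
Variables (R : realType) (n : nat).
Local Notation V := 'rV[R]_n.
Implicit Types (f g : 'I_n -> R) (x y z : V).

Lemma sum_sqr_ge0 f : 0 <= \sum_i f i ^+ 2.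
Proof. by apply: sumr_ge0 => i _; apply: sqr_ge0. Qed.

Lemma sum_sqr_lincomb a b f g :
  \sum_i (a * f i + b * g i) ^+ 2 =
  a ^+ 2 * \sum_i f i ^+ 2 + 2 * a * b * \sum_i f i * g i + b ^+ 2 * \sum_i g i ^+ 2.
Proof. by rewrite !mulr_sumr -!big_split; apply: eq_bigr => i _ /=; ring. Qed.

Lemma cauchy_schwarz f g :
  (\sum_i f i * g i) ^+ 2 <= (\sum_i f i ^+ 2) * (\sum_i g i ^+ 2).
Proof.
set A := \sum_i f i ^+ 2; set B := \sum_i g i ^+ 2; set S := \sum_i f i * g i.
have /predU1P[B0|B_gt0] : (B == 0) || (0 < B) by rewrite eq_sym -le_eqVlt sum_sqr_ge0.
  have g0 i : g i = 0.
    by apply/eqP; rewrite -sqrf_eq0; apply/eqP/(psumr_eq0P _ B0) => // j _; apply: sqr_ge0.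
  by rewrite /S big1 ?B0 ?expr0n ?mulr0 // => i _; rewrite g0 mulr0.
have := sum_sqr_ge0 (fun i => B * f i + - S * g i).
rewrite sum_sqr_lincomb -/A -/B -/S => h.
have : 0 <= B * (A * B - S ^+ 2) by move: h; congr (_ <= _); ring.
by rewrite pmulr_rge0 // subr_ge0 mulrC.
Qed.

Lemma minkowski f g :
  Num.sqrt (\sum_i (f i + g i) ^+ 2) <=
  Num.sqrt (\sum_i f i ^+ 2) + Num.sqrt (\sum_i g i ^+ 2).
Proof.
have [A0 B0] := (sum_sqr_ge0 f, sum_sqr_ge0 g).
have S_le : \sum_i f i * g i <= Num.sqrt (\sum_i f i ^+ 2) * Num.sqrt (\sum_i g i ^+ 2).
  rewrite -sqrtrM // (le_trans (ler_norm _)) // -sqrtr_sqr ler_sqrt ?cauchy_schwarz //.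
  exact: mulr_ge0.
rewrite -[leRHS]ger0_norm ?addr_ge0 ?sqrtr_ge0 // -sqrtr_sqr ler_sqrt ?sqr_ge0 //.
have := sum_sqr_lincomb 1 1 f g; under eq_bigr do rewrite !mul1r.
by move=> ->; rewrite sqrrD !sqr_sqrtr //; lra.
Qed.

Lemma edist_ge0 x y : 0 <= edist x y.
Proof. exact: sqrtr_ge0. Qed.

Lemma edistC x y : edist x y = edist y x.
Proof. by congr Num.sqrt; apply: eq_bigr => i _; rewrite -opprB sqrrN. Qed.

Lemma edist_triangle x y z : edist x z <= edist x y + edist y z.
Proof.
have := minkowski (fun i => x ord0 i - y ord0 i) (fun i => y ord0 i - z ord0 i).
by under eq_bigr do rewrite addrA subrK.
Qed.

Lemma edist_coord_le x y i : `|x ord0 i - y ord0 i| <= edist x y.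
Proof.
rewrite -sqrtr_sqr ler_sqrt ?sum_sqr_ge0 // (bigD1 i) //= lerDl.
by apply: sumr_ge0 => j _; apply: sqr_ge0.
Qed.

Lemma edist_le_sqrtn x y a : 0 <= a -> (forall i, `|x ord0 i - y ord0 i| <= a) ->
  edist x y <= Num.sqrt n%:R * a.
Proof.
move=> a0 xy_le; rewrite -(ger0_norm a0) -sqrtr_sqr -sqrtrM ?ler0n // ler_sqrt; last first.
  by rewrite mulr_ge0 ?ler0n ?sqr_ge0.
have -> : n%:R * a ^+ 2 = \sum_(i < n) a ^+ 2 by rewrite sumr_const card_ord mulr_natl.
apply: ler_sum => i _.
by rewrite -[_ ^+ 2]real_normK ?num_real // lerXn2r ?nnegrE.
Qed.

Lemma edist_scale x y (a b : V) (c : R) :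
  (forall i, x ord0 i - y ord0 i = c * (a ord0 i - b ord0 i)) -> edist x y = `|c| * edist a b.
Proof.
move=> xyE; rewrite -sqrtr_sqr -sqrtrM ?sqr_ge0 // mulr_sumr.
by congr Num.sqrt; apply: eq_bigr => i _; rewrite xyE exprMn.
Qed.

Lemma exists_between (p y : V) t : 0 <= t <= edist p y ->
  exists w, edist p w = t /\ edist w y = edist p y - t.
Proof.
move=> /andP[t_ge0 t_le]; have [D0|D_gt0] := eqVneq (edist p y) 0.
  have t0 : t = 0 by apply: le_anti; rewrite t_ge0 -D0 t_le.
  exists p; rewrite t0 subr0 D0; split; last by [].
  rewrite (edist_scale (a := p) (b := y) (c := 0)) ?normr0 ?mul0r // => i.
  by rewrite !subrr mul0r.
have [lam lamD /andP[lam_ge0 lam_le1]] : exists2 lam, lam * edist p y = t & 0 <= lam <= 1.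
  exists (t / edist p y); first by rewrite divfK.
  by rewrite divr_ge0 ?edist_ge0 //= ler_pdivrMr ?mul1r // lt_def D_gt0 edist_ge0.
exists (p + lam *: (y - p)); split.
  rewrite (edist_scale (a := y) (b := p) (c := (- lam))); last by move=> i; rewrite !mxE; ring.
  by rewrite normrN ger0_norm // edistC.
rewrite (edist_scale (a := p) (b := y) (c := (1 - lam))); last by move=> i; rewrite !mxE; ring.
by rewrite ger0_norm ?subr_ge0 // mulrBl mul1r lamD.
Qed.

End Euclid.

Section OrderStatistics.
Variables (d : Order.disp_t) (T : orderType d) (x0 : T).
Implicit Types (s : seq T) (x : T).
Local Open Scope order_scope.

Lemma sorted_nth_le s k x : sorted <=%O s -> (k < size s)%N ->
  (nth x0 s k <= x) = (k < count (<= x) s)%N.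
Proof.
elim: s k => [//|a s IHs] k /= a_s; have a_le := allP (order_path_min le_trans a_s).
have [ax|xa] := leP a x; first by case: k => [|k] /= k_lt; rewrite ?ax // IHs ?(path_sorted a_s).
have -> : count (<= x) s = 0%N.
  apply/eqP; rewrite -leqn0 leqNgt -has_count; apply/hasPn => b /a_le ab.
  by rewrite -ltNge (lt_le_trans xa).
case: k => [|k] k_lt; apply/negbTE; rewrite -ltNge //=.
by rewrite (lt_le_trans xa) // a_le // mem_nth.
Qed.

Lemma nth_sort_le s k x : (k < size s)%N ->
  (nth x0 (sort <=%O s) k <= x) = (k < count (<= x) s)%N.
Proof.
by move=> k_lt; rewrite -(count_sort <=%O) sorted_nth_le ?size_sort //.
Qed.

End OrderStatistics.

Section CoreDistance.
Variables (R : realType) (n : nat).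
Local Notation V := 'rV[R]_n.
Implicit Types (Z Y : {fset V}) (p : V) (x : R).
Local Open Scope fset_scope.
Local Notation ball Z p x := [fset z in Z `\ p | (edist p z <= x)%R].

Lemma card_fset_sep (A : {fset V}) (P : pred V) :
  #|` [fset z in A | P z]| = count P (enum_fset A).
Proof.
have -> : [fset z in A | P z] = [fset z in filter P (enum_fset A)].
  by apply/fsetP => z; rewrite !inE mem_filter andbC.
by rewrite card_fseq undup_id ?size_filter // filter_uniq.
Qed.

(* Without [k < #|` Z `\ p|], [nth] falls back to its default value [0]. *)
Lemma core_dist_le k Z p x : (k < #|` Z `\ p|)%N ->
  (core_dist k.+1 Z p <= x) = (k < #|` ball Z p x|)%N.
Proof.
by move=> k_lt; rewrite /= nth_sort_le ?size_map ?card_fset_sep ?count_map.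
Qed.

Lemma core_dist_le_card k Z p x :
  (k < #|` [fset y in Z | (edist p y <= x)%R]|)%N -> core_dist k Z p <= x.
Proof.
set B := [fset y in Z | _]; case: k => [|k] k_lt.
  move: k_lt; rewrite cardfs_gt0 => /fset0Pn[y]; rewrite inE => /andP[_].
  exact: le_trans (edist_ge0 p y).
have k_ball : (k < #|` ball Z p x|)%N.
  have Bp_sub : B `\ p `<=` ball Z p x.
    by apply/fsubsetP => z; rewrite !inE => /andP[-> /andP[-> ->]].
  apply: leq_trans (fsubset_leq_card Bp_sub).
  by move: k_lt; rewrite (cardfsD1 p B); case: (p \in B) => /=; lia.
rewrite core_dist_le //; apply: leq_trans k_ball _.
exact/fsubset_leq_card/fset_sub.
Qed.

Lemma core_dist_sub k Z Y p : Z `<=` Y ->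
  (forall z, z \in Y `\ p -> edist p z <= core_dist k Y p -> z \in Z) ->
  core_dist k Z p = core_dist k Y p.
Proof.
move=> ZY near_in; case: k near_in => [//|k] near_in.
have ZpYp : Z `\ p `<=` Y `\ p by apply: fsetSD.
have [k_lt|k_ge] := ltnP k #|` Y `\ p|; last first.
  rewrite /= !nth_default ?size_sort ?size_map //.
  exact: leq_trans (fsubset_leq_card ZpYp) k_ge.
set c := core_dist k.+1 Y p.
have ballE x : x <= c -> ball Z p x = ball Y p x.
  move=> xc; apply/fsetP => z; rewrite !inE.
  apply/andP/andP => -[/andP[zp zin] pzx]; split => //; rewrite zp /=.
    exact: (fsubsetP ZY).
  by apply: near_in (le_trans pzx xc); rewrite in_fsetD1 zp.
have k_ball : (k < #|` ball Y p c|)%N by rewrite -core_dist_le.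
have k_ltZ : (k < #|` Z `\ p|)%N.
  by rewrite -ballE // in k_ball; apply: leq_trans k_ball (fsubset_leq_card (fset_sub _ _)).
have cZ_le : core_dist k.+1 Z p <= c by rewrite core_dist_le // ballE.
apply: le_anti; rewrite cZ_le /= core_dist_le // -ballE //.
by rewrite -core_dist_le.
Qed.

End CoreDistance.

Lemma clamp_near (R : realDomainType) (lo hi u v y K : R) :
  lo <= hi -> u <= y <= v -> lo - u <= K -> v - hi <= K -> 0 <= K ->
  lo <= Num.max lo (Num.min hi y) <= hi /\ `|y - Num.max lo (Num.min hi y)| <= K.
Proof.
move=> lohi /andP[uy yv] loK hiK K0.
have [yhi|hiy] := leP y hi; rewrite ?(min_r yhi) ?(min_l (ltW hiy)).
  have [loy|ylo] := leP lo y; rewrite ?(max_r loy) ?(max_l (ltW ylo)) ?lexx ?loy ?yhi.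
    by rewrite subrr normr0.
  by rewrite lohi ler_norml; split=> //; lra.
by rewrite max_r // lohi lexx ler_norml; split=> //; lra.
Qed.

Section Cubes.
Variables (R : realType) (n : nat) (eps : R).
Hypotheses (n_gt0 : (0 < n)%N) (eps_gt0 : 0 < eps).
Local Notation V := 'rV[R]_n.
Local Notation sd := (@side R n eps).

Definition adjacent (t u : 'I_n -> int) := forall i, `|t i - u i| <= 1.

Lemma sqrtn_gt0 : 0 < Num.sqrt (n%:R : R).
Proof. by rewrite sqrtr_gt0 ltr0n. Qed.

Lemma side_gt0 : 0 < sd.
Proof. by rewrite divr_gt0 // mulr_gt0 // sqrtn_gt0. Qed.

Lemma eps_side : eps = 2 * Num.sqrt n%:R * sd.
Proof. by rewrite /side mulrC divfK // gt_eqF // mulr_gt0 // sqrtn_gt0. Qed.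

Definition cube_of (x : V) : 'I_n -> int := fun i => Num.floor (x ord0 i / sd).

Lemma mem_cube_of x : cube eps (cube_of x) x.
Proof.
move=> i; rewrite -ler_pdivlMr ?side_gt0 // floor_le /=.
by rewrite -ler_pdivrMr ?side_gt0 // ltW // floorD1_gt.
Qed.

Lemma cube_sub_enl j t (K : int) : (forall i, `|t i - j i| <= K) ->
  (cube eps j `<=` @enl R n eps K (cube eps t))%classic.
Proof.
move=> tj y yj; pose s i := Num.max ((t i)%:~R * sd) (Num.min ((t i + 1)%:~R * sd) (y ord0 i)).
have s_prop i : (t i)%:~R * sd <= s i <= (t i + 1)%:~R * sd /\ `|y ord0 i - s i| <= K%:~R * sd.
  have [tjl tjr] : - K <= t i - j i /\ t i - j i <= K by apply/andP; rewrite -ler_norml.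
  have sd_gt0 := side_gt0.
  apply: clamp_near (yj i) _ _ _.
  - by rewrite ler_pM2r // ler_int; lia.
  - by rewrite -mulrBl ler_pM2r // -intrB ler_int.
  - by rewrite -mulrBl ler_pM2r // -intrB ler_int; lia.
  - by apply: mulr_ge0 (ltW sd_gt0); rewrite ler0z; lia.
by exists (\row_i s i) => i; rewrite mxE; case: (s_prop i).
Qed.

Lemma adjacent_cubes_meet t u : adjacent t u -> exists x : V, cube eps t x /\ cube eps u x.
Proof.
move=> tu; exists (\row_i ((Num.max (t i) (u i))%:~R * sd)).
split=> i; rewrite mxE !ler_pM2r ?side_gt0 // !ler_int;
  have := tu i; rewrite ler_norml; case: leP; lia.
Qed.

Lemma cube_of_dist (w y : V) i :
  (`|cube_of w i - cube_of y i|%:~R : R) < `|w ord0 i - y ord0 i| / sd + 1.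
Proof.
have sd_gt0 := side_gt0.
have sdV_gt0 : 0 < sd^-1 by rewrite invr_gt0.
rewrite -(gtr0_norm sdV_gt0) -normrM mulrBl intr_norm intrB /cube_of.
move: (w ord0 i / sd) (y ord0 i / sd) => a b.
have := floorD1_gt a; have := floorD1_gt b; rewrite !intrD !rmorph1.
have := floor_le a; have := floor_le b; have := ler_norm (a - b).
have := ler_norm (b - a); rewrite distrC ltr_norml; lra.
Qed.

Lemma edist_cube_le j (x w : V) : cube eps j x -> cube eps j w -> edist x w <= eps / 2.
Proof.
move=> xj wj; have sd_gt0 := side_gt0.
have -> : eps / 2 = Num.sqrt n%:R * sd by rewrite [in LHS]eps_side; field.
apply: edist_le_sqrtn (ltW sd_gt0) _ => i.
by move: (xj i) (wj i); rewrite intrD mulrDl mul1r ler_norml => /andP[? ?] /andP[? ?]; lra.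
Qed.

Lemma enlD (a b : int) S (x y : V) : enl eps a S x ->
  (forall i, `|y ord0 i - x ord0 i| <= b%:~R * sd) -> enl eps (a + b) S y.
Proof.
move=> [s Ss xs] yx; exists s => // i; rewrite intrD mulrDl [leRHS]addrC.
exact: le_trans (ler_distD (x ord0 i) _ _) (lerD (yx i) (xs i)).
Qed.

End Cubes.

Section BoundaryCubes.
Variables (R : realType) (n : nat) (eps : R) (X A : {fset 'rV[R]_n}).
Hypotheses (n_gt0 : (0 < n)%N) (eps_gt0 : 0 < eps).
Local Notation meetsA := (meets eps (fset_set_of A)).
Implicit Types j t u jw : 'I_n -> int.

Lemma adjacentC t u : adjacent t u -> adjacent u t.
Proof. by move=> tu i; rewrite distrC. Qed.

Lemma adjacent_refl t : adjacent t t.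
Proof. by move=> i; rewrite subrr normr0. Qed.

Lemma boundary_cube_outside j x : meetsA j -> x \in X -> x \notin A ->
  enl eps 1 (cube eps j) x -> boundary_cube eps X A j.
Proof. by move=> jA xX xA jx; split=> // -[_ /(_ x jx xX) xA']; rewrite xA' in xA. Qed.

Lemma boundary_cube_empty j t : meetsA j -> adjacent t j -> ~ meetsA t ->
  boundary_cube eps X A j.
Proof.
move=> jA tj tA; split=> // -[_ _ nbA]; apply/tA/nbA.
exact/(cube_sub_enl n_gt0 eps_gt0)/adjacentC.
Qed.

Lemma interior_adjacent_meets j t : interior_cube eps X A j -> adjacent t j -> meetsA t.
Proof. by move=> [_ _ nbA] tj; apply/nbA/(cube_sub_enl n_gt0 eps_gt0)/adjacentC. Qed.

Lemma boundary_adjacent_meets_bdry u t : boundary_cube eps X A u -> adjacent t u ->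
  meets eps (bdry eps X A) t.
Proof.
move=> uB tu; have [x [tx ux]] := adjacent_cubes_meet n_gt0 eps_gt0 tu.
by exists x; split=> //; exists u.
Qed.

Definition step_toward jw j i := j i + Num.sg (jw i - j i).

Lemma adjacent_step_toward jw j : adjacent (step_toward jw j) j.
Proof. by move=> i; rewrite /step_toward addrAC subrr add0r normr_sg; case: (_ != 0). Qed.

Lemma step_toward_dist jw j (m : nat) i :
  `|jw i - j i| <= m%:Z + 1 -> `|jw i - step_toward jw j i| <= m%:Z.
Proof.
rewrite /step_toward opprD addrA.
case: (ltrgtP (jw i - j i) 0) => [d_lt0|d_gt0|->]; last by rewrite sgr0; lia.
  by rewrite ltr0_sg //; lia.
by rewrite gtr0_sg //; lia.
Qed.

Lemma meets_bdry_or_step_meets jw j : meetsA j ->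
  meets eps (bdry eps X A) j \/ meetsA (step_toward jw j).
Proof.
move=> jA; have [jB|jnB] := pselect (boundary_cube eps X A j).
  by left; apply: boundary_adjacent_meets_bdry jB (adjacent_refl j).
have jI : interior_cube eps X A j by apply: contrapT => jnI; apply: jnB.
by right; apply: interior_adjacent_meets jI (adjacent_step_toward jw j).
Qed.

Definition boundary_around jw :=
  forall u, adjacent u jw -> meetsA u -> boundary_cube eps X A u.

Lemma boundary_around_outside p : p \in X -> p \notin A -> boundary_around (cube_of eps p).
Proof.
move=> pX pA u u_p uA; apply: boundary_cube_outside uA pX pA _.
by apply: (cube_sub_enl n_gt0 eps_gt0 u_p); apply: mem_cube_of.
Qed.

Lemma boundary_around_empty jw : ~ meetsA jw -> boundary_around jw.
Proof. by move=> jwA u u_jw uA; apply: boundary_cube_empty uA (adjacentC u_jw) jwA. Qed.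

Lemma near_boundary_cube jw : boundary_around jw ->
  forall (m : nat) j, meetsA j -> (forall i, `|jw i - j i| <= m%:Z + 2) ->
  exists2 t, meets eps (bdry eps X A) t & forall i, `|t i - j i| <= m%:Z.
Proof.
move=> jw_bd m; elim: m => [|m IHm] j jA jw_j.
all: have [jbd|j1A] := meets_bdry_or_step_meets jw jA;
  first by exists j => // i; rewrite subrr normr0.
all: have j1j := adjacent_step_toward jw j.
  exists j => [|i]; last by rewrite subrr normr0.
  apply: boundary_adjacent_meets_bdry (adjacentC j1j).
  apply/jw_bd/j1A/adjacentC => i; apply: step_toward_dist.
  by rewrite (le_trans (jw_j i)) //; lia.
have jw_j1 i : `|jw i - step_toward jw j i| <= m%:Z + 2.
  by apply: step_toward_dist; rewrite (le_trans (jw_j i)) //; lia.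
have [t tB t_j1] := IHm _ j1A jw_j1; exists t => // i.
apply: le_trans (ler_distD (step_toward jw j i) _ _) _.
by have := t_j1 i; have := j1j i; lia.
Qed.

End BoundaryCubes.

Section Thickening.
Variables (R : realType) (n : nat) (eps : R).
Hypotheses (n_gt0 : (0 < n)%N) (eps_gt0 : 0 < eps).
Local Notation V := 'rV[R]_n.
Local Notation sd := (@side R n eps).
Local Notation nf := (@nfrak R n).
Local Notation Nf := (@Nfrak R n).

Lemma sqrtn_ge1 : 1 <= Num.sqrt (n%:R : R).
Proof. by rewrite -[leLHS]sqrtr1 ler_sqrt ?ler0n // ler1n. Qed.

Lemma Nfrak_ge0 : 0 <= Nf.
Proof. by have := sqrtn_ge1 => sqrt_ge1; rewrite addr_ge0 // ceil_ge0; lra. Qed.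

Lemma Nfrak_ge : 3 * Num.sqrt (n%:R : R) - 1 <= Nf%:~R.
Proof.
have := ceil_ge (Num.sqrt (n%:R : R) - 1); have := ceil_ge (2 * Num.sqrt (n%:R : R)).
by rewrite intrD; lra.
Qed.

Lemma thicken_core (Z : set V) p y : edist p y <= eps ->
  thicken eps nf Z p -> thicken eps Nf Z y.
Proof.
move=> py [j [jZ pj]]; exists j; split=> //; apply: (enlD pj) => i.
apply: le_trans (edist_coord_le _ _ _) _.
rewrite edistC (le_trans py) // [leLHS](eps_side eps n_gt0).
by rewrite ler_pM2r ?(side_gt0 n_gt0 eps_gt0) ?ceil_ge.
Qed.

Lemma cube_of_dist_Nfrak (w y : V) : edist w y <= 3 / 2 * eps + sd ->
  forall i, `|cube_of eps w i - cube_of eps y i| <= Nf + 2.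
Proof.
move=> wy i; have sd_gt0 := side_gt0 n_gt0 eps_gt0.
suff : (`|cube_of eps w i - cube_of eps y i|%:~R : R) < (Nf + 3)%:~R by rewrite ltr_int; lia.
apply: lt_le_trans (cube_of_dist n_gt0 eps_gt0 w y i) _.
have : `|w ord0 i - y ord0 i| / sd <= 3 * Num.sqrt n%:R + 1.
  rewrite ler_pdivrMr // mulrDl mul1r (le_trans (edist_coord_le w y i)) //.
  by rewrite (le_trans wy) // {1}(eps_side eps n_gt0); lra.
by rewrite intrD; have := Nfrak_ge; lra.
Qed.

Lemma exists_boundary_centre (X C : {fset V}) p y r0 : p \in X -> p \notin C -> y \in C ->
  (forall x, x \in C -> r0 <= edist p x) -> edist p y <= r0 + eps ->
  exists w, edist w y <= 3 / 2 * eps + sd /\ boundary_around eps X C (cube_of eps w).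
Proof.
(* The centre w is p when r0 is small, and otherwise the point of the segment [p, y] at
   distance r0 - eps/2 - side from p, whose cube misses C. *)
move=> pX pC yC r0_le py; have sd_gt0 := side_gt0 n_gt0 eps_gt0.
have [r0_small|r0_big] := lerP r0 (eps / 2 + sd).
  exists p; split; first lra.
  by apply: boundary_around_outside.
have r0_py := r0_le y yC.
have [|w [pw wy]] := exists_between (p := p) (y := y) (t := r0 - eps / 2 - sd).
  by apply/andP; split; lra.
exists w; split; first lra.
apply: (boundary_around_empty X n_gt0 eps_gt0) => -[x [wx xC]].
have := r0_le x xC; have := edist_triangle p w x.
have := edist_cube_le n_gt0 eps_gt0 (mem_cube_of n_gt0 eps_gt0 w) wx; lra.
Qed.

Lemma thicken_noise (X C : {fset V}) p y r0 : p \in X -> p \notin C -> y \in C ->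
  (forall x, x \in C -> r0 <= edist p x) -> edist p y <= r0 + eps ->
  thicken eps Nf (bdry eps X C) y.
Proof.
move=> pX pC yC r0_le py.
have [w [wy w_around]] := exists_boundary_centre pX pC yC r0_le py.
have yC' : meets eps (fset_set_of C) (cube_of eps y).
  by exists y; split=> //; apply: mem_cube_of.
have Nf_abs : (absz Nf)%:Z = Nf by rewrite gez0_abs ?Nfrak_ge0.
have w_y i : `|cube_of eps w i - cube_of eps y i| <= (absz Nf)%:Z + 2.
  by rewrite Nf_abs; apply: cube_of_dist_Nfrak.
have [t tB t_y] := near_boundary_cube n_gt0 eps_gt0 w_around yC' w_y.
exists t; split=> //; apply: (cube_sub_enl n_gt0 eps_gt0 _ (mem_cube_of n_gt0 eps_gt0 y)).
by move=> i; rewrite -Nf_abs.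
Qed.

End Thickening.

Lemma fset_argmin (d : Order.disp_t) (O : orderType d) (T : choiceType) (A : {fset T})
    (f : T -> O) a :
  a \in A -> exists2 z, z \in A & forall x, x \in A -> (f z <= f x)%O.
Proof.
move=> aA; case: (@arg_minP _ _ _ [` aA]%fset predT (fun x => f (val x)) isT) => z _ zmin.
by exists (val z) => [|x xA]; [apply: valP | apply: (zmin [` xA]%fset)].
Qed.

Section Dbscan.
Variables (R : realType) (n : nat) (k : nat) (eps : R) (Y : {fset 'rV[R]_n}).
Local Notation core := (core_pts k eps Y).
Local Open Scope fset_scope.

Lemma dbscan_comp_sub C : dbscan_comp k eps Y C -> C `<=` core.
Proof. by case=> p _ ->; apply: fset_sub. Qed.

Lemma dbscan_comp_closed C p y : dbscan_comp k eps Y C -> p \in C -> y \in core ->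
  edist p y <= eps -> y \in C.
Proof.
case=> c cc -> + yc py; rewrite in_fset => /andP[pc /asboolP[_ [s [cs sp s_core]]]].
rewrite in_fset; apply/andP; split=> //; apply/asboolP; split=> //; exists (rcons s y).
by rewrite rcons_path last_rcons all_rcons cs sp yc.
Qed.

Lemma exists_dbscan_comp y : y \in core -> exists2 C, dbscan_comp k eps Y C & y \in C.
Proof.
move=> yc; exists [fset q in core | `[< reach eps core y q >]]; first by exists y.
by rewrite in_fset; apply/andP; split=> //; apply/asboolP; split=> //; exists [::].
Qed.

End Dbscan.

Section CoreDistanceOnF.
Local Open Scope fset_scope.
Variables (R : realType) (n : nat) (X Y : {fset 'rV[R]_n}) (k : nat) (eps : R).
Hypotheses (n_gt0 : (0 < n)%N) (YX : Y `<=` X) (eps_gt0 : 0 < eps).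
Local Notation core := (core_pts k eps Y).
Local Notation F := (Fset X k eps Y).

Lemma Fset_sub : F `<=` Y.
Proof. exact: fset_sub. Qed.

Lemma noise_in_Fset y : y \in noise_pts k eps Y -> y \in F.
Proof.
move=> yN; rewrite in_fset; apply/andP; split; last by apply/asboolP; right.
by move: yN; rewrite in_fsetD => /andP[].
Qed.

Lemma thicken_comp_in_Fset C y : dbscan_comp k eps Y C -> y \in C ->
  thicken eps (@Nfrak R n) (bdry eps X C) y -> y \in F.
Proof.
move=> CD yC y_thick; rewrite in_fset; apply/andP; split.
  by apply: (fsubsetP (fset_sub _ _)); apply: (fsubsetP (dbscan_comp_sub CD)).
by apply/asboolP; left; exists C.
Qed.

Lemma JsetP p : p \in Jset X k eps Y -> p \in noise_pts k eps Y \/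
  exists C, [/\ dbscan_comp k eps Y C, p \in C & thicken eps (@nfrak R n) (bdry eps X C) p].
Proof.
rewrite in_fset => /andP[_ /asboolP[[C [CD [p_thick pC]]]|pN]]; last by left.
by right; exists C.
Qed.

Lemma core_dist_core p : p \in core -> core_dist k Y p <= eps.
Proof. by rewrite in_fset => /andP[_]; apply: core_dist_le_card. Qed.

Lemma core_dist_le_nearest p z : z \in core -> (core_dist k Y p <= edist p z + eps)%R.
Proof.
rewrite in_fset => /andP[_ z_card]; apply: core_dist_le_card.
apply: leq_trans z_card (fsubset_leq_card _); apply/fsubsetP => y.
rewrite !in_fset => /andP[yY zy]; apply/andP; split=> //.
by apply: le_trans (edist_triangle p z y) _; rewrite lerD2l.
Qed.

Lemma near_Jset_in_Fset p z : p \in Jset X k eps Y -> z \in Y ->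
  edist p z <= core_dist k Y p -> z \in F.
Proof.
move=> pJ zY pz; have [zc|znc] := boolP (z \in core); last first.
  by apply: noise_in_Fset; rewrite in_fsetD znc.
case: (JsetP pJ) => [pN|[C [CD pC p_thick]]].
  have [C CD zC] := exists_dbscan_comp zc.
  have [z0 z0C z0_min] := fset_argmin (edist p) zC.
  have C_core := fsubsetP (dbscan_comp_sub CD).
  move: pN; rewrite in_fsetD => /andP[pnc pY].
  have pX := fsubsetP YX p pY.
  apply: (thicken_comp_in_Fset CD zC); apply: (thicken_noise n_gt0 eps_gt0 pX _ zC z0_min).
    by apply: contra pnc; apply: C_core.
  exact: le_trans pz (core_dist_le_nearest p (C_core z0 z0C)).
have pz_eps : edist p z <= eps.
  exact: le_trans pz (core_dist_core (fsubsetP (dbscan_comp_sub CD) p pC)).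
apply: (thicken_comp_in_Fset CD (dbscan_comp_closed CD pC zc pz_eps)).
exact: thicken_core n_gt0 eps_gt0 _ _ _ pz_eps p_thick.
Qed.

Lemma core_dist_Fset p : p \in Jset X k eps Y -> core_dist k F p = core_dist k Y p.
Proof.
move=> pJ; apply: core_dist_sub Fset_sub _ => z.
by rewrite in_fsetD1 => /andP[_ zY]; apply: near_Jset_in_Fset.
Qed.

End CoreDistanceOnF.

Local Open Scope fset_scope.

Theorem lemma5p4 (R : realType) (n : nat) (X Y : {fset 'rV[R]_n}) (k : nat) (eps : R)
  (p q : 'rV[R]_n) :
  (2 <= n)%N -> Y `<=` X -> 0 < eps ->
  p \in Jset X k eps Y -> q \in Jset X k eps Y ->
  reach_dist k (Fset X k eps Y) p q = reach_dist k Y p q.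
Proof.
move=> n_ge2 YX eps_gt0 pJ qJ; have n_gt0 : (0 < n)%N by apply: ltnW.
by rewrite /reach_dist !core_dist_Fset.
Qed.
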